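(* Let $n\in\mathbb{N}$, $\varkappa\in\mathbb{N}^n$, $N=|\varkappa|$. Then $\det M(y,\varkappa)=\det G_\emptyset(y,\varkappa)$.
   Context: $\operatorname{e}_m$ is the elementary symmetric polynomial of degree $m$, zero for $m<0$ or $m$ larger than the number of variables. For a list of nonnegative integers $\mu$, $y^{[\mu]}$ is the list in which $y_1$ is repeated $\mu_1$ times, then $y_2$ repeated $\mu_2$ times, etc.; $b_q$ is the $q$th standard unit vector in $\mathbb{Z}^n$. Each $p\in\{1,\ldots,N\}$ is written uniquely as $p=\varkappa_1+\cdots+\varkappa_{q-1}+r$ with $1\le q\le n$, $1\le r\le\varkappa_q$. $M(y,\varkappa)$ is the $N\times N$ matrix with $M(y,\varkappa)_{k,p}=(-1)^{N-k-r+1}\operatorname{e}_{N-k-r+1}(y^{[\varkappa-rb_q]})$. $G_\emptyset(y,\varkappa)$ is the $N\times N$ confluent Vandermonde matrix with $(j,p)$ entry $\binom{N-j}{r-1}y_q^{N-j-r+1}$ if $N-j-r+1\ge0$ and $0$ otherwise. *)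

From mathcomp Require Import all_boot all_order all_algebra.
Set Implicit Arguments. Unset Strict Implicit. Unset Printing Implicit Defensive.
Import GRing.Theory.
Local Open Scope ring_scope.

Definition esym (R : comRingType) (m : nat) (s : seq R) : R :=
  \sum_(I : {set 'I_(size s)} | #|I| == m) \prod_(i in I) s`_i.

Definition yrep (R : comRingType) (n : nat) (y : n.-tuple R) (mu : seq nat)
  : seq R :=
  flatten [seq nseq (nth 0%N mu i) (nth 0 y i) | i <- iota 0 n].

(* Block decomposition, 0-based: for p0 (= p - 1), returns (q0, r0) with
   q0 = q - 1, r0 = r - 1 and p0 = kappa_0 + ... + kappa_(q0-1) + r0,
   r0 < kappa_(q0). *)
Fixpoint blk (s : seq nat) (p : nat) : nat * nat :=
  match s with
  | [::] => (0%N, p)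
  | k :: s' => if (p < k)%N then (0%N, p)
               else let qr := blk s' (p - k) in (qr.1.+1, qr.2)
  end.

(* kappa - r b_q, with 0-based q0 and r = r0 + 1 *)
Definition kappa_minus (n : nat) (kappa : n.-tuple nat) (q0 r : nat) : seq nat :=
  [seq (if i == q0 then nth 0%N kappa i - r else nth 0%N kappa i)%N
  | i <- iota 0 n].

(* M(y,kappa), 0-based indices k0 = k-1, p0 = p-1; the exponent
   N-k-r+1 becomes N - k0 - r0 - 1, negative iff ~~ (k0 + r0 < N). *)
Definition Mmat (R : comRingType) (n : nat) (y : n.-tuple R)
  (kappa : n.-tuple nat) : 'M[R]_(sumn kappa) :=
  let N := sumn kappa in
  \matrix_(k < N, p < N)
    let q0 := (blk kappa p).1 in let r0 := (blk kappa p).2 in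
    if (k + r0 < N)%N then
      (-1) ^+ (N - k - r0 - 1) *
        esym (N - k - r0 - 1) (yrep y (kappa_minus kappa q0 r0.+1))
    else 0.

(* Confluent Vandermonde G_emptyset(y,kappa), 0-based indices j0, p0:
   binom(N-j, r-1) y_q^(N-j-r+1) = 'C(N-j0-1, r0) y_q0^(N-j0-r0-1). *)
Definition Gmat (R : comRingType) (n : nat) (y : n.-tuple R)
  (kappa : n.-tuple nat) : 'M[R]_(sumn kappa) :=
  let N := sumn kappa in
  \matrix_(j < N, p < N)
    let q0 := (blk kappa p).1 in let r0 := (blk kappa p).2 in
    if (j + r0 < N)%N then
      ('C(N - j - 1, r0))%:R * (nth 0 y q0) ^+ (N - j - r0 - 1)
    else 0.

From Pilot Require Import Defs.
From mathcomp Require Import all_boot all_order all_algebra.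
From mathcomp Require Import zify ring.
Set Implicit Arguments. Unset Strict Implicit. Unset Printing Implicit Defensive.
Import GRing.Theory.
Local Open Scope ring_scope.

(* Let P = prod_q (X - y_q)^(kappa_q), monic of degree N.  Column p = (q, r)
   of M lists the coefficients of the cofactor P / (X - y_q)^r, while column p
   of G lists the (r-1)-th divided derivative at y_q of the monomials
   X^(N-1), ..., X^0.  Expanding 1 / (X - y_q)^r as a power series in 1/X shows
   that the coefficients of the cofactor are obtained from those of P through
   the upper unitriangular Toeplitz matrix U_ij = P_(N-j+i), i.e. M = U G,
   and det U = 1. *)

Section CofactorCoefficients.
Variable R : comNzRingType.
Implicit Types (Q : {poly R}) (a : R).

Lemma coefMXsubC Q a k : (Q * ('X - a%:P))`_k.+1 = Q`_k - a * Q`_k.+1.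
Proof. by rewrite mulrBr coefB coefMX coefMC mulrC. Qed.

Lemma coef_cofactor_XsubC Q a N i :
  (size (Q * ('X - a%:P))%R <= N.+1)%N ->
  Q`_i = \sum_(i <= k < N) (Q * ('X - a%:P))`_k.+1 * a ^+ (k - i).
Proof.
have [->|Q0] := eqVneq Q 0.
  by move=> _; rewrite coef0 big1 // => k _; rewrite mul0r coef0 mul0r.
rewrite size_Mmonic ?monicXsubC // size_XsubC addn2 ltnS => sQ.
have [Ni|iN] := ltnP N i.
  by rewrite big_geq ?(ltnW Ni) // nth_default // (leq_trans sQ) // ltnW.
transitivity (\sum_(i <= k < N)
    (- (Q`_k.+1 * a ^+ (k.+1 - i)) - - (Q`_k * a ^+ (k - i)))).
  by rewrite telescope_sumr // subnn expr0 mulr1 (nth_default _ sQ) mul0r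
     oppr0 opprK add0r.
apply: eq_big_nat => k /andP [ik _].
by rewrite coefMXsubC subSn // exprS; ring.
Qed.

Lemma exchange_big_nat_triangle (F : nat -> nat -> R) i N :
  \sum_(i <= j < N) \sum_(j.+1 <= k < N) F j k =
  \sum_(i <= k < N) \sum_(i <= j < k) F j k.
Proof.
elim: N => [|N IH]; first by rewrite !big_geq.
have [Ni|iN] := ltnP N i; first by rewrite !big_geq.
rewrite [RHS]big_nat_recr //= -IH big_nat_recr //= [X in _ + X]big_geq // addr0.
rewrite -big_split; apply: eq_big_nat => j /andP [_ jN].
by rewrite big_nat_recr.
Qed.

Lemma hockey_stick i k r : \sum_(i <= j < k) 'C(k - j.+1, r) = 'C(k - i, r.+1).
Proof.
move Ed: (k - i)%N => d; elim: d i Ed => [|d IH] i Ed.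
  by rewrite big_geq ?bin0n //; lia.
rewrite big_ltn; last by lia.
by rewrite IH; [rewrite binS addnC; congr ('C(_, _) + _)|]; lia.
Qed.

(* Q = P / (X - a)^(r+1) is the polynomial part of
   P * sum_(k >= r) 'C(k, r) a^(k - r) X^(-k-1). *)
Lemma coef_cofactor_XsubCn Q a r N i :
  (size (Q * ('X - a%:P) ^+ r.+1)%R <= N.+1)%N ->
  Q`_i = \sum_(i <= k < N)
     (Q * ('X - a%:P) ^+ r.+1)`_k.+1 * 'C(k - i, r)%:R * a ^+ (k - i - r).
Proof.
elim: r Q i => [|r IH] Q i.
  rewrite expr1 => /coef_cofactor_XsubC ->; apply: eq_big_nat => k _.
  by rewrite bin0 mulr1 subn0.
set Q1 := Q * ('X - a%:P).
have -> : Q * ('X - a%:P) ^+ r.+2 = Q1 * ('X - a%:P) ^+ r.+1.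
  by rewrite exprS mulrA.
move=> sP; have sQ1 : (size Q1 <= N.+1)%N.
  have [->|Q10] := eqVneq Q1 0; first by rewrite size_poly0.
  move: sP; rewrite size_Mmonic ?monic_exp ?monicXsubC // size_exp_XsubC.
  by rewrite addnS /=; lia.
rewrite (coef_cofactor_XsubC i sQ1) -/Q1.
set P := Q1 * _.
transitivity (\sum_(i <= j < N) \sum_(j.+1 <= k < N)
    a ^+ (j - i) * (P`_k.+1 * 'C(k - j.+1, r)%:R * a ^+ (k - j.+1 - r))).
  apply: eq_big_nat => j _; rewrite (IH Q1 j.+1 sP) mulr_suml.
  by apply: eq_big_nat => k _; rewrite mulrC.
rewrite exchange_big_nat_triangle; apply: eq_big_nat => k /andP [ik kN].
transitivity (\sum_(i <= j < k) P`_k.+1 * a ^+ (k - i - r.+1) * 'C(k - j.+1, r)%:R).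
  apply: eq_big_nat => j /andP [ij jk].
  have [small|big] := ltnP (k - j.+1) r.
    by rewrite bin_small // !(mulr0, mul0r, mulr0n).
  have -> : (k - i - r.+1 = (j - i) + (k - j.+1 - r))%N by lia.
  by rewrite exprD; ring.
by rewrite -mulr_sumr -natr_sum hockey_stick mulrAC.
Qed.

End CofactorCoefficients.

Lemma blk_spec (s : seq nat) p : (p < sumn s)%N ->
  ((blk s p).1 < size s)%N /\ ((blk s p).2 < nth 0%N s (blk s p).1)%N.
Proof.
elim: s p => [|k s IH] p //= hp; case: ifP => // pk /=.
by apply: IH; move/negbT: pk; rewrite -leqNgt; lia.
Qed.

Section RepeatedRoots.
Variables (R : comNzRingType) (n : nat) (y : n.-tuple R).

Lemma prod_XsubC_yrep (mu : seq nat) :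
  \prod_(z <- yrep y mu) ('X - z%:P) =
  \prod_(i < n) ('X - (nth 0 y i)%:P) ^+ nth 0%N mu i.
Proof.
rewrite /yrep big_flatten big_map.
have -> : iota 0 n = index_iota 0 n by rewrite /index_iota subn0.
rewrite big_mkord.
by apply: eq_bigr => i _; rewrite big_nseq iter_mulr_1.
Qed.

Lemma size_yrep (kappa : n.-tuple nat) : size (yrep y kappa) = sumn kappa.
Proof.
rewrite /yrep size_flatten /shape -map_comp.
rewrite (eq_map (g := nth 0%N kappa)) => [|i /=]; last by rewrite size_nseq.
by rewrite -{2}(mkseq_nth 0%N kappa) size_tuple.
Qed.

Lemma prod_XsubC_yrep_kappa_minus (kappa : n.-tuple nat) q r :
  (q < n)%N -> (r <= nth 0%N kappa q)%N ->
  \prod_(z <- yrep y kappa) ('X - z%:P) =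
  \prod_(z <- yrep y (kappa_minus kappa q r)) ('X - z%:P) *
    ('X - (nth 0 y q)%:P) ^+ r.
Proof.
move=> qn rk; rewrite !prod_XsubC_yrep (bigD1 (Ordinal qn)) //=.
rewrite [in RHS](bigD1 (Ordinal qn)) //=.
have nth_km (i : 'I_n) : nth 0%N (kappa_minus kappa q r) i
    = if val i == q then (nth 0%N kappa i - r)%N else nth 0%N kappa i.
  by rewrite /kappa_minus (nth_map 0%N) ?size_iota // nth_iota.
rewrite (nth_km (Ordinal qn)) eqxx [RHS]mulrC mulrA -exprD addnC subnK //.
congr (_ * _); apply: eq_bigr => i ineq; rewrite nth_km ifN //.
Qed.

End RepeatedRoots.

Definition coef_toeplitz (R : comNzRingType) (N : nat) (P : {poly R}) : 'M[R]_N :=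
  \matrix_(i, j) if (i <= j)%N then P`_(N - j + i) else 0.

Lemma det_coef_toeplitz (R : comNzRingType) (N : nat) (P : {poly R}) :
  P \is monic -> size P = N.+1 -> \det (coef_toeplitz N P) = 1.
Proof.
move=> /monicP lcP sP; rewrite -det_tr det_trig; last first.
  by apply/is_trig_mxP => i j ij; rewrite !mxE leqNgt ij.
rewrite big1 // => i _; rewrite !mxE leqnn subnK ?(ltnW (ltn_ord i)) //.
by rewrite -lcP lead_coefE sP.
Qed.

Section Factorization.
Variables (R : comNzRingType) (n : nat) (kappa : n.-tuple nat) (y : n.-tuple R).
Local Notation N := (sumn kappa).
Local Notation P := (\prod_(z <- yrep y kappa) ('X - z%:P)).

Lemma size_prod_yrep : size P = N.+1.
Proof. by rewrite size_prod_XsubC size_yrep. Qed.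

Lemma Mmat_coef_cofactor (k p : 'I_N) :
  let: (q, r) := blk kappa p in
  Mmat y kappa k p =
    (\prod_(z <- yrep y (kappa_minus kappa q r.+1)) ('X - z%:P))`_k.
Proof.
rewrite mxE; case Eqr: (blk kappa p) => [q r] /=.
have [qn rk] := blk_spec (ltn_ord p); rewrite Eqr size_tuple /= in qn rk.
set cs := yrep y _.
have size_cs : (size cs + r.+1 = N)%N.
  have := size_prod_yrep.
  rewrite (prod_XsubC_yrep_kappa_minus y qn rk) size_Mmonic; last first.
  - exact/monic_exp/monicXsubC.
  - by rewrite monic_neq0 ?monic_prod_XsubC.
  by rewrite (size_prod_XsubC _ id) size_exp_XsubC addnS => -[].
case: ifP => [kr|/negbT kr].
  by rewrite coef_prod_XsubC; [congr (_ ^+ _ * Defs.esym _ _)|]; lia.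
by rewrite nth_default // (size_prod_XsubC _ id) -(ltn_add2r r.+1) size_cs addnS ltnS leqNgt.
Qed.

Lemma Mmat_factor : Mmat y kappa = coef_toeplitz N P *m Gmat y kappa.
Proof.
apply/matrixP => k p; have := Mmat_coef_cofactor k p.
have [qn rk] := blk_spec (ltn_ord p); rewrite size_tuple in qn.
rewrite !mxE; case Eqr: (blk kappa p) qn rk => [q r] /= qn rk ->.
set a := nth 0 y q.
have P_split := prod_XsubC_yrep_kappa_minus y qn rk.
rewrite (@coef_cofactor_XsubCn _ _ a r N k) -P_split ?size_prod_yrep //.
pose F j := (if (k <= j)%N then P`_(N - j + k) else 0) *
  (if (j + r < N)%N then 'C(N - j - 1, r)%:R * a ^+ (N - j - r - 1) else 0).
rewrite (eq_bigr (fun j : 'I_N => F j)) => [|j _]; last by rewrite !mxE Eqr.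
rewrite -(big_mkord xpredT F).
rewrite (@big_cat_nat _ _ _ k 0 N _ _ (leq0n k) (ltnW (ltn_ord k))) /=.
rewrite [X in _ = X + _]big_nat_cond [X in _ = X + _]big1 ?add0r; last first.
  by move=> j /andP [/andP [_ jk] _]; rewrite /F leqNgt jk mul0r.
(* the summation index k' of the cofactor formula is column k + N - 1 - k' of U *)
rewrite big_nat_rev /=; apply: eq_big_nat => j /andP [kj jN].
rewrite /F kj.
have -> : ((k + N - j.+1).+1 = N - j + k)%N by lia.
have -> : (k + N - j.+1 - k = N - j - 1)%N by lia.
have -> : (N - j - 1 - r = N - j - r - 1)%N by lia.
case: ifP => [_|/negbT]; first by rewrite mulrA.
by rewrite -leqNgt => jr; rewrite bin_small ?mulr0n ?mulr0 ?mul0r //; lia.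
Qed.

End Factorization.

Theorem mainTheorem4 (R : comRingType) (n : nat) (kappa : n.-tuple nat)
  (y : n.-tuple R) :
  \det (Mmat y kappa) = \det (Gmat y kappa).
Proof.
rewrite Mmat_factor det_mulmx det_coef_toeplitz ?mul1r //.
  exact: monic_prod_XsubC.
exact: size_prod_yrep.
Qed.
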